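(* There is no $(4,1,p)$-QRA coding with $p>1/2$. That is, there do not exist a real number $p>1/2$, one-qubit density operators $\rho_x$ (positive semidefinite $2\times 2$ complex matrices of trace $1$) for $x\in\{0,1\}^4$, and POVMs $\{E^i_0,E^i_1\}$ for $i\in\{1,2,3,4\}$ such that $\mathrm{Tr}(E^i_{x_i}\rho_x)\ge p$ for all $x\in\{0,1\}^4$ and all $i\in\{1,2,3,4\}$, where $x_i$ denotes the $i$-th bit of $x$.
   Context: An $(n,m,p)$-quantum random access (QRA) coding is a map assigning to each $n$-bit string $x\in\{0,1\}^n$ an $m$-qubit state $\rho_x$ (a positive semidefinite trace-one operator on $\mathbb{C}^{2^m}$) such that for every $i\in\{1,\dots,n\}$ there is a POVM $E^i=\{E^i_0,E^i_1\}$ (i.e. $E^i_0,E^i_1$ are positive semidefinite Hermitian operators on $\mathbb{C}^{2^m}$ with $E^i_0+E^i_1=I$) satisfying $\mathrm{Tr}(E^i_{x_i}\rho_x)\ge p$ for all $x\in\{0,1\}^n$, where $x_i$ is the $i$-th bit of $x$. *)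

From HB Require Import structures.
From mathcomp Require Import all_boot all_order all_algebra.
From mathcomp Require Import complex reals.
Set Implicit Arguments. Unset Strict Implicit. Unset Printing Implicit Defensive.
Import Order.TTheory GRing.Theory Num.Theory.
Local Open Scope ring_scope.

Definition adjmx (C : numClosedFieldType) (k l : nat) (A : 'M[C]_(k, l)) : 'M[C]_(l, k) :=
  (map_mx Num.conj A)^T.

Definition psd (C : numClosedFieldType) (d : nat) (A : 'M[C]_d) : Prop :=
  adjmx A = A /\ forall v : 'cV[C]_d, 0 <= (adjmx v *m A *m v) 0 0.

Definition density (C : numClosedFieldType) (d : nat) (rho : 'M[C]_d) : Prop :=
  psd rho /\ \tr rho = 1.

(* two-outcome POVM {E false, E true} (outcome 0 = false, 1 = true) *)
Definition povm2 (C : numClosedFieldType) (d : nat) (E : bool -> 'M[C]_d) : Prop :=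
  psd (E false) /\ psd (E true) /\ E false + E true = 1%:M.

Definition qra_coding (R : realType) (n m : nat) (p : R) : Prop :=
  exists (rho : {ffun 'I_n -> bool} -> 'M[R[i]]_(2 ^ m))
         (E : 'I_n -> bool -> 'M[R[i]]_(2 ^ m)),
    (forall x, density (rho x)) /\
    (forall i, povm2 (E i)) /\
    (forall (x : {ffun 'I_n -> bool}) (i : 'I_n),
        (p%:C)%C <= \tr (E i (x i) *m rho x)).

(* The real span of the Hermitian d x d matrices, d = 2^m, has dimension d^2, so for
   n >= d^2 the identity and the n effects E^i_1 satisfy a nontrivial real
   relation a_0 I + sum_i a_i E^i_1 = 0.  Tracing against rho_x gives
   a_0 + sum_i a_i Tr(E^i_1 rho_x) = 0 for every x.  With p > 1/2, choosing
   x_i = [a_i > 0] makes sum_i a_i (Tr(E^i_1 rho_x) - 1/2) at least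
   (p - 1/2) sum_i |a_i|, and choosing x_i = [a_i < 0] makes it at most the
   opposite; as the quantity does not depend on x, all a_i vanish. *)
From HB Require Import structures.
From mathcomp Require Import all_boot all_order all_algebra.
From mathcomp Require Import complex reals lra.
Import Order.TTheory GRing.Theory Num.Theory.
Local Open Scope ring_scope.
Set Implicit Arguments. Unset Strict Implicit.

Lemma kermx_neq0 (R : fieldType) (k l : nat) (M : 'M[R]_(k, l)) :
  (l < k)%N -> exists2 v : 'rV[R]_k, v != 0 & v *m M = 0.
Proof.
move=> lt_lk; exists (nz_row (kermx M)).
  rewrite nz_row_eq0 -mxrank_eq0 mxrank_ker subn_eq0 -ltnNge.
  exact: leq_ltn_trans (rank_leq_col M) lt_lk.
by apply/eqP; rewrite -sub_kermx nz_row_sub.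
Qed.

Section HermitianDependence.
Variable R : rcfType.
Local Notation C := R[i].
Local Open Scope complex_scope.

Lemma Re_realCM (a : R) (z : C) : complex.Re (a%:C * z) = a * complex.Re z.
Proof. by case: z => x y /=; rewrite mul0r subr0. Qed.

Lemma Im_realCM (a : R) (z : C) : complex.Im (a%:C * z) = a * complex.Im z.
Proof. by case: z => x y /=; rewrite mul0r addr0. Qed.

Lemma conjc_realCM (a : R) (z : C) : (a%:C * z)^* = a%:C * z^*.
Proof. by case: z => x y; simpc. Qed.

Variable d : nat.

Lemma adjmx_id_entry (A : 'M[C]_d) : adjmx A = A -> forall k l, A l k = (A k l)^*.
Proof. by move=> A_herm k l; rewrite -{1}A_herm !mxE. Qed.

(* d^2 real coordinates which determine a Hermitian matrix (herm_coord_eq0). *)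
Definition herm_coord (A : 'M[C]_d) : 'M[R]_d :=
  \matrix_(k, l) if (k <= l)%N then complex.Re (A k l) else complex.Im (A l k).

Lemma herm_coord_sum (k : nat) (a : 'rV[R]_k) (H : 'I_k -> 'M[C]_d) :
  herm_coord (\sum_j (a 0 j)%:C *: H j) = \sum_j a 0 j *: herm_coord (H j).
Proof.
apply/matrixP => r s; rewrite !mxE !summxE; under [RHS]eq_bigr do rewrite mxE.
case: ifP => rs; rewrite raddf_sum; apply: eq_bigr => j _.
  by rewrite !mxE rs /= Re_realCM.
by rewrite !mxE rs /= Im_realCM.
Qed.

Lemma herm_coord_eq0 (A : 'M[C]_d) :
  (forall k l, A l k = (A k l)^*) -> herm_coord A = 0 -> A = 0.
Proof.
move=> A_herm /matrixP coord0.
have Re0 (k l : 'I_d) : (k <= l)%N -> complex.Re (A k l) = 0.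
  by move=> le_kl; have := coord0 k l; rewrite !mxE le_kl.
have Im0 (k l : 'I_d) : (k < l)%N -> complex.Im (A k l) = 0.
  by move=> lt_kl; have := coord0 l k; rewrite !mxE leqNgt lt_kl.
have Im_diag0 k : complex.Im (A k k) = 0.
  have := congr1 (@complex.Im R) (A_herm k k); case: (A k k) => x y /= /eqP.
  by rewrite -subr_eq0 opprK -mulr2n mulrn_eq0 => /eqP.
have upper0 (k l : 'I_d) : (k <= l)%N -> A k l = 0.
  move=> le_kl; rewrite [A k l]complexE Re0 //.
  have [->|ne_kl] := eqVneq k l; first by rewrite Im_diag0 mulr0 addr0.
  rewrite Im0 ?mulr0 ?addr0 // ltn_neqAle le_kl andbT.
  by apply: contra ne_kl => /eqP/val_inj->.
apply/matrixP => k l; rewrite mxE.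
have [le_kl|lt_lk] := leqP k l; first exact: upper0.
by rewrite A_herm upper0 ?conjc0 // ltnW.
Qed.

Lemma hermitian_dependent (k : nat) (H : 'I_k -> 'M[C]_d) :
  (d * d < k)%N -> (forall j, adjmx (H j) = H j) ->
  exists2 a : 'rV[R]_k, a != 0 & \sum_j (a 0 j)%:C *: H j = 0.
Proof.
move=> lt_dd_k H_herm.
pose M := \matrix_j mxvec (herm_coord (H j)).
have [a a_neq0 aM0] := kermx_neq0 M lt_dd_k; exists a => //.
apply: herm_coord_eq0.
  move=> r s; rewrite !summxE rmorph_sum; apply: eq_bigr => j _.
  by rewrite !mxE /= conjc_realCM (adjmx_id_entry (H_herm j) r s).
apply: (can_inj (@mxvecK _ d d)); rewrite herm_coord_sum linear_sum linear0.
by rewrite -[RHS]aM0 mulmx_sum_row; apply: eq_bigr => j _; rewrite linearZ rowK.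
Qed.

Lemma Re_tr_real_comb (k : nat) (a : 'rV[R]_k) (H : 'I_k -> 'M[C]_d) (B : 'M[C]_d) :
  complex.Re (\tr ((\sum_j (a 0 j)%:C *: H j) *m B))
  = \sum_j a 0 j * complex.Re (\tr (H j *m B)).
Proof.
rewrite mulmx_suml [\tr _]raddf_sum [complex.Re _]raddf_sum /=.
by apply: eq_bigr => j _; rewrite -scalemxAl mxtraceZ Re_realCM.
Qed.

End HermitianDependence.

Lemma ler_mul_norm_aligned (R : realDomainType) (l s c : R) :
  (0 < l -> c <= s) -> (l < 0 -> s <= - c) -> c * `|l| <= l * s.
Proof.
case: (ltrgtP l 0) => [l_lt0 _ /(_ isT) s_le|l_gt0 /(_ isT) c_le _|-> _ _].
- by rewrite ltr0_norm //; nra.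
- by rewrite gtr0_norm //; nra.
- by rewrite normr0 mulr0 mul0r.
Qed.

Lemma biased_functional_eq0 (R : realFieldType) (n : nat) (b c : R)
    (lam : 'I_n -> R) (T : {ffun 'I_n -> bool} -> 'I_n -> R) :
  0 < c ->
  (forall (x : {ffun 'I_n -> bool}) i, x i -> b + c <= T x i) ->
  (forall (x : {ffun 'I_n -> bool}) i, ~~ x i -> T x i <= b - c) ->
  (forall x y, \sum_i lam i * T x i = \sum_i lam i * T y i) ->
  forall i, lam i = 0.
Proof.
move=> c_gt0 T_hi T_lo lamT_const.
pose S x := \sum_i lam i * (T x i - b).
have S_const x y : S x = S y.
  rewrite /S; under eq_bigr do rewrite mulrBr; under [RHS]eq_bigr do rewrite mulrBr.
  by rewrite !sumrB (lamT_const x y).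
pose xp := [ffun i => 0 < lam i]; pose xm := [ffun i => lam i < 0].
have S_xp : \sum_i c * `|lam i| <= S xp.
  apply: ler_sum => i _; apply: ler_mul_norm_aligned => lam_sign.
    by have := T_hi xp i; rewrite ffunE lam_sign; lra.
  by have := T_lo xp i; rewrite ffunE lt_gtF //; lra.
have S_xm : S xm <= - \sum_i c * `|lam i|.
  rewrite -sumrN; apply: ler_sum => i _.
  rewrite lerNr -mulNr -normrN.
  apply: ler_mul_norm_aligned; rewrite ?oppr_gt0 ?oppr_lt0 => lam_sign.
    by have := T_hi xm i; rewrite ffunE lam_sign; lra.
  by have := T_lo xm i; rewrite ffunE lt_gtF //; lra.
have term_ge0 j : true -> 0 <= c * `|lam j| by rewrite mulr_ge0 // ltW.
have norm_sum0 : \sum_i c * `|lam i| = 0.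
  have : 0 <= \sum_i c * `|lam i| := sumr_ge0 _ term_ge0.
  by rewrite (S_const xp xm) in S_xp; lra.
move=> i.
have /eqP := psumr_eq0P term_ge0 norm_sum0 (i := i) isT.
by rewrite mulf_eq0 gt_eqF //= normr_eq0 => /eqP.
Qed.

Lemma povm2_tr (C : numClosedFieldType) (d : nat)
    (E : bool -> 'M[C]_d) (rho : 'M[C]_d) :
  povm2 E -> density rho -> \tr (E false *m rho) + \tr (E true *m rho) = 1.
Proof. by move=> [_ [_ E_sum]] [_ tr_rho]; rewrite -mxtraceD -mulmxDl E_sum mul1mx. Qed.

Theorem no_qra_coding (R : realType) (n m : nat) (p : R) :
  (4 ^ m <= n)%N -> 1 / 2 < p -> ~ qra_coding n m p.
Proof.
move=> n_large p_gt [rho [E [rho_density [E_povm E_succ]]]].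
pose H (j : 'I_n.+1) := if unlift ord0 j is Some i then E i true else 1%:M.
have [a a_neq0 a_rel] :
    exists2 a : 'rV[R]_n.+1, a != 0 & \sum_j (a 0 j)%:C%C *: H j = 0.
  apply: hermitian_dependent => [|j]; first by rewrite -expnMn ltnS.
  rewrite /H; case: unlift => [i|]; first by case: (E_povm i) => _ [[]].
  by rewrite /adjmx map_scalar_mx rmorph1 tr_scalar_mx.
pose T x i := complex.Re (\tr (E i true *m rho x)).
have T_rel x : a 0 ord0 + \sum_i a 0 (lift ord0 i) * T x i = 0.
  have := congr1 (fun A => complex.Re (\tr (A *m rho x))) a_rel.
  rewrite /= Re_tr_real_comb mul0mx mxtrace0 big_ord_recl /H unlift_none mul1mx.
  rewrite (proj2 (rho_density x)) mulr1 raddf0 => rel; rewrite -[RHS]rel.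
  by congr (_ + _); apply: eq_bigr => i _; rewrite liftK.
have T_succ (x : {ffun 'I_n -> bool}) i :
    p <= complex.Re (\tr (E i (x i) *m rho x)).
  by have := E_succ x i; rewrite lecE => /andP[].
have T_sum (x : {ffun 'I_n -> bool}) i :
    complex.Re (\tr (E i false *m rho x)) + T x i = 1.
  by rewrite -raddfD povm2_tr ?E_povm ?rho_density.
have lam0 : forall i, a 0 (lift ord0 i) = 0.
  apply: (biased_functional_eq0 (b := 1 / 2) (c := p - 1 / 2) (T := T)).
  - by rewrite subr_gt0.
  - by move=> x j x_j; have := T_succ x j; rewrite /T x_j; lra.
  - by move=> x j x_j; have := T_succ x j; have := T_sum x j; rewrite (negbTE x_j); lra.
  - by move=> x y; have := T_rel x; have := T_rel y; lra.
have a00 : a 0 ord0 = 0.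
  by have := T_rel [ffun=> false]; rewrite big1 ?addr0 // => i _; rewrite lam0 mul0r.
move/eqP: a_neq0; apply; apply/rowP => j; rewrite mxE.
by case: (unliftP ord0 j) => [i ->|->].
Qed.

Theorem theorem1 (R : realType) (p : R) :
  1 / 2 < p -> ~ qra_coding 4 1 p.
Proof. exact: no_qra_coding. Qed.
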